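(* Let $G$ be a simple loopless graph on $[L]$ and $p\ge1$. For every $(\pi,\phi)\in\Pi_{2p}(G)$, one has $\Phi_p(\pi,\phi)\in\mathcal{P}_{2p}(G)$.
   Context: $\mathcal{T}(G)=\langle v\in[L]: uv=vu \text{ for } (u,v)\in E(G)\rangle$ is the trace monoid of $G$, $e$ the empty word. Words $w_1,w_2\in\mathcal{T}(G)$ are adjacent, $w_1\leftrightarrow w_2$, if $w_1=vw_2$ or $w_2=vw_1$ for some letter $v\in[L]$. $\mathcal{P}_{2p}(G)=\{w\in\mathcal{T}(G)^{2p}: e\leftrightarrow w_1\leftrightarrow w_2\leftrightarrow\cdots\leftrightarrow w_{2p}=e\}$ (closed paths of length $2p$ from $e$ in the Cayley graph of $\mathcal{T}(G)$). $P_2(2p)$ is the set of pair partitions of $[2p]$; blocks $\{u_1,v_1\},\{u_2,v_2\}$ cross if $u_1<u_2<v_1<v_2$; $F_\pi$ is the graph on the blocks of $\pi$ with edges between crossing blocks. $\Pi_{2p}(G)=\{(\pi,\phi):\pi\in P_2(2p),\ \phi\in\operatorname{Hom}(F_\pi,G)\}$. Definition of $\Phi_p:\Pi_{2p}(G)\to\mathcal{T}(G)^{2p}$: (1) For $p=1$, if $\phi$ assigns label $i$ to the unique block $\{1,2\}$, $\Phi_1(\pi,\phi)=(i,e)$. (2) Given $\Phi_p$ and $(\pi,\phi)\in\Pi_{2(p+1)}(G)$, let $r$ be the smallest index that is the larger element of its block, $U=\{s,r\}\in\pi$ with $s<r$, $i_s=\phi(U)$, $\sigma=\pi\setminus\{U\}$,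 $\psi=\phi|_\sigma$. Identify $P_2([2(p+1)]\setminus\{s,r\})$ with $P_2(2p)$ via the order-preserving bijection, and write $u=\Phi_p(\sigma,\psi)=(u_k)_{k\in[2(p+1)]\setminus\{s,r\}}$; let $u_{k^-}$ be $u_j$ for the largest $j<k$, $j\notin\{s,r\}$, or $e$ if none exists. Then $\Phi_{p+1}(\pi,\phi)_k=u_k$ for $k<s$; $i_su_{s^-}$ for $k=s$; $i_su_k$ for $s<k<r$; $u_{r^-}$ for $k=r$; $u_k$ for $k>r$. *)

From mathcomp Require Import all_boot.
Set Implicit Arguments. Unset Strict Implicit. Unset Printing Implicit Defensive.

(* Convention: positions of [2p] are 0-indexed, i.e. {0,...,2p-1}
   (order-preserving shift of the paper's {1,...,2p}). *)

Section TraceMonoid.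
Variable L : nat.
Variable E : rel 'I_L.

(* Words over [L]; the trace monoid T(G) is seq 'I_L modulo teq, the
   congruence generated by u v = v u for (u,v) in E(G). *)
Inductive teq : seq 'I_L -> seq 'I_L -> Prop :=
| teq_refl w : teq w w
| teq_sym w1 w2 : teq w1 w2 -> teq w2 w1
| teq_trans w1 w2 w3 : teq w1 w2 -> teq w2 w3 -> teq w1 w3
| teq_swap (x y : seq 'I_L) (u v : 'I_L) :
    E u v -> teq (x ++ u :: v :: y) (x ++ v :: u :: y).

(* adjacency in the Cayley graph of T(G): w1 = v w2 or w2 = v w1 *)
Definition tadj (w1 w2 : seq 'I_L) : Prop :=
  exists v : 'I_L, teq w1 (v :: w2) \/ teq w2 (v :: w1).

(* w (given by representative words) is in P_{2p}(G):
   e <-> w_1 <-> ... <-> w_{2p} = e  (in T(G)) *)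
Definition in_paths (p : nat) (w : seq (seq 'I_L)) : Prop :=
  size w = (2 * p)%N /\
  (forall k, k < 2 * p -> tadj (nth [::] ([::] :: w) k) (nth [::] ([::] :: w) k.+1)) /\
  teq (nth [::] w (2 * p).-1) [::].

(* A labelled pair partition: list of blocks ((s, r), label) with s < r. *)
Definition lblock := (nat * nat * 'I_L)%type.

Definition is_pairpart (p : nat) (B : seq lblock) : bool :=
  all (fun b : lblock => b.1.1 < b.1.2) B &&
  perm_eq (flatten [seq [:: b.1.1; b.1.2] | b <- B]) (iota 0 (2 * p)).

Definition crossb (b c : lblock) : bool :=
  ((b.1.1 < c.1.1) && (c.1.1 < b.1.2) && (b.1.2 < c.1.2)) ||
  ((c.1.1 < b.1.1) && (b.1.1 < c.1.2) && (c.1.2 < b.1.2)).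

(* the labelling is a graph homomorphism F_pi -> G *)
Definition is_hom (B : seq lblock) : Prop :=
  forall b c, b \in B -> c \in B -> crossb b c -> E b.2 c.2.

(* order-preserving bijection [2(p+1)] \ {s,r} -> [2p] *)
Definition newidx (s r k : nat) : nat := k - (s < k) - (r < k).

Fixpoint Phi (n : nat) (B : seq lblock) {struct n} : seq (seq 'I_L) :=
  match n with
  | 0 => [::]
  | n'.+1 =>
    let rmin := foldr minn (2 * n) [seq b.1.2 | b <- B] in
    match [seq b <- B | b.1.2 == rmin] with
    | [::] => [::]
    | U :: _ =>
      let s := U.1.1 in let r := U.1.2 in let i := U.2 in
      if n' is 0 then [:: [:: i]; [::]] else
      let B' := [seq ((newidx s r b.1.1, newidx s r b.1.2), b.2)
                | b <- B & b != U] in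
      let u := Phi n' B' in
      let uat k := nth [::] u (newidx s r k) in
      let uminus k :=
        let J := [seq j <- iota 0 k | (j != s) && (j != r)] in
        if J is [::] then [::] else uat (last 0 J) in
      [seq (if k < s then uat k
            else if k == s then i :: uminus s
            else if k < r then i :: uat k
            else if k == r then uminus r
            else uat k) | k <- iota 0 (2 * n)]
    end
  end.

End TraceMonoid.

From mathcomp Require Import all_boot zify.
Set Implicit Arguments. Unset Strict Implicit. Unset Printing Implicit Defensive.

(* Read a labelled pairing as a walk in the Cayley graph: a block {s, r}
   labelled i prescribes that the walk multiplies by i on the left at step s
   and removes that letter again at step r.  Phi removes the block U = {s, r}
   whose right end r is smallest, builds the shorter walk, and prepends i to
   the words strictly between s and r.  A block starting strictly inside
   (s, r) must end after r, so it crosses U; its label therefore commutes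
   with i and its step is still a left multiplication. *)

Lemma uniq_flatten_map_eq (T S : eqType) (g : T -> seq S) (B : seq T) b c x :
  uniq (flatten (map g B)) -> b \in B -> c \in B -> x \in g b -> x \in g c -> b = c.
Proof.
elim: B => [|a B IH] //=; rewrite cat_uniq => /and3P[_ gaB uB].
have gaBP d : d \in B -> x \in g a -> x \in g d -> False.
  by move=> dB xa xd; case/negP: gaB; apply/hasP; exists x => //; apply/flatten_mapP; exists d.
rewrite !inE => /predU1P[->|bB] /predU1P[->|cB] // xb xc.
- by case: (gaBP c).
- by case: (gaBP b).
- exact: IH.
Qed.

Lemma foldr_minn_le d (s : seq nat) y : y \in s -> foldr minn d s <= y.
Proof.
elim: s => //= a s IH; rewrite inE => /predU1P[->|/IH]; first exact: geq_minl.
exact/leq_trans/geq_minr.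
Qed.

Lemma foldr_minn_mem d (s : seq nat) :
  s != [::] -> {in s, forall y, y <= d} -> foldr minn d s \in s.
Proof.
elim: s => //= a s IH _ le_sd; rewrite inE.
case: (leqP a (foldr minn d s)) => [le_a|lt_a]; first by rewrite eqxx.
case: s IH le_sd lt_a => [|b s] IH le_sd /=.
  by move: (le_sd a (mem_head _ _)); lia.
by move=> _; rewrite IH ?orbT // => y y_in; apply: le_sd; rewrite inE y_in orbT.
Qed.

Lemma filter_iotaS (P : pred nat) k :
  [seq j <- iota 0 k.+1 | P j] =
  if P k then rcons [seq j <- iota 0 k | P j] k else [seq j <- iota 0 k | P j].
Proof. by rewrite -addn1 iotaD add0n /= cats1 filter_rcons. Qed.

Lemma newidx_ltE s r x y : s < r -> x \notin [:: s; r] -> y \notin [:: s; r] ->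
  (newidx s r x < newidx s r y) = (x < y).
Proof. by rewrite !inE /newidx => *; apply/idP/idP; lia. Qed.

Lemma newidx_onto s r n k : s < r -> r < n.+2 -> k < n ->
  exists2 x, x < n.+2 & x \notin [:: s; r] /\ newidx s r x = k.
Proof.
rewrite /newidx => lt_sr lt_rn lt_kn.
case: (ltnP k s) => [lt_ks|le_sk]; first by exists k; rewrite ?inE; lia.
case: (ltnP k.+1 r) => [lt_kr|le_rk]; first by exists k.+1; rewrite ?inE; lia.
by exists k.+2; rewrite ?inE; lia.
Qed.

Section TracePaths.
Variables (L : nat) (E : rel 'I_L).

Lemma teq_catl x a b : teq E a b -> teq E (x ++ a) (x ++ b).
Proof.
elim=> [w|w1 w2 _ IH|w1 w2 w3 _ IH1 _ IH2|y z u v Euv].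
- exact: teq_refl.
- exact: teq_sym.
- exact: teq_trans IH1 IH2.
- by rewrite !catA; apply: teq_swap.
Qed.

Definition vtx (w : seq (seq 'I_L)) k := nth [::] ([::] :: w) k.

Definition ends (b : lblock L) := [:: b.1.1; b.1.2].

Definition pairing n (B : seq (lblock L)) :=
  [/\ {in B, forall b, b.1.1 < b.1.2}, {in B, forall b, b.1.2 < n},
      forall k, k < n -> exists2 b, b \in B & k \in ends b &
      forall b c x, b \in B -> c \in B -> x \in ends b -> x \in ends c -> b = c].

Definition block_steps (B : seq (lblock L)) w :=
  {in B, forall b, teq E (vtx w b.1.1.+1) (b.2 :: vtx w b.1.1) /\
                   teq E (vtx w b.1.2) (b.2 :: vtx w b.1.2.+1)}.

Definition pairing_walk N B w :=
  [/\ size w = N, teq E (vtx w N) [::] & block_steps B w].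

Lemma is_pairpart_pairing p B : is_pairpart p B -> pairing (2 * p) B.
Proof.
case/andP=> /allP lt_B perm_B.
have memB x : (x \in flatten (map ends B)) = (x < 2 * p).
  by rewrite (perm_mem perm_B) mem_iota.
split=> // [b bB|k|b c x bB cB].
- by rewrite -memB; apply/flatten_mapP; exists b; rewrite ?inE ?eqxx ?orbT.
- by rewrite -memB => /flatten_mapP[b]; exists b.
- by apply: uniq_flatten_map_eq bB cB; rewrite (perm_uniq perm_B) iota_uniq.
Qed.

Lemma pairing_ends_disjoint n B U b x : pairing n B -> U \in B -> b \in B ->
  b != U -> x \in ends b -> x \notin ends U.
Proof.
case=> _ _ _ disjB UB bB /eqP bU xb; apply/negP => xU.
exact: bU (disjB _ _ _ bB UB xb xU).
Qed.

Lemma pairing_min_block n B : pairing n B -> 0 < n ->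
  exists U rest, [/\ [seq b <- B | b.1.2 == foldr minn n [seq b.1.2 | b <- B]]
                     = U :: rest, U \in B & {in B, forall b, U.1.2 <= b.1.2}].
Proof.
case=> _ lt_B cover _ n_gt0; set m := foldr minn _ _.
have m_le b : b \in B -> m <= b.1.2 by move=> bB; apply/foldr_minn_le/map_f.
have: m \in [seq b.1.2 | b <- B].
  apply: foldr_minn_mem => [|y /mapP[b bB ->]]; last exact/ltnW/lt_B.
  have [b bB _] := cover 0 n_gt0.
  by case: [seq _ | _ <- B] (map_f (fun b : lblock L => b.1.2) bB).
case/mapP=> c cB m_c.
have: c \in [seq b <- B | b.1.2 == m] by rewrite mem_filter cB m_c eqxx.
case E_U: [seq b <- B | _] => [//|U rest] _.
have: U \in [seq b <- B | b.1.2 == m] by rewrite E_U mem_head.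
by rewrite mem_filter => /andP[/eqP U_m UB]; exists U, rest; split=> // b /m_le; rewrite U_m.
Qed.

Definition remove_block (U : lblock L) (B : seq (lblock L)) :=
  [seq ((newidx U.1.1 U.1.2 b.1.1, newidx U.1.1 U.1.2 b.1.2), b.2) | b <- B & b != U].

Lemma mem_remove_block U B b : b \in B -> b != U ->
  ((newidx U.1.1 U.1.2 b.1.1, newidx U.1.1 U.1.2 b.1.2), b.2) \in remove_block U B.
Proof. by move=> bB bU; apply/mapP; exists b; rewrite // mem_filter bU. Qed.

Lemma remove_blockP U B b' : b' \in remove_block U B ->
  exists2 b, (b \in B) && (b != U) &
             b' = ((newidx U.1.1 U.1.2 b.1.1, newidx U.1.1 U.1.2 b.1.2), b.2).
Proof. by case/mapP=> b; rewrite mem_filter andbC; exists b. Qed.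

Lemma ends_remove_block s r (b : lblock L) x :
  x \in ends ((newidx s r b.1.1, newidx s r b.1.2), b.2) ->
  exists2 y, y \in ends b & x = newidx s r y.
Proof.
by rewrite !inE => /predU1P[->|/eqP->]; [exists b.1.1 | exists b.1.2]; rewrite ?inE ?eqxx ?orbT.
Qed.

Section RemoveMinBlock.
Variables (n : nat) (B : seq (lblock L)) (s r : nat) (i : 'I_L).
Hypotheses (pairB : pairing n.+2 B) (UB : ((s, r), i) \in B).
Hypothesis r_min : {in B, forall b, r <= b.1.2}.

Local Notation U := ((s, r), i).

Lemma other_block_ends b : b \in B -> b != U ->
  b.1.1 \notin [:: s; r] /\ b.1.2 \notin [:: s; r].
Proof.
move=> bB bU.
by split; apply: (pairing_ends_disjoint pairB UB bB bU); rewrite !inE eqxx ?orbT.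
Qed.

Lemma pairing_remove_block : pairing n (remove_block U B).
Proof.
have [lt_B bnd_B cover disj] := pairB.
have lt_sr : s < r := lt_B _ UB.
have lt_rn : r < n.+2 := bnd_B _ UB.
split.
- move=> b' /remove_blockP[b /andP[bB bU] ->] /=.
  have [sb rb] := other_block_ends bB bU; rewrite newidx_ltE //; exact: lt_B.
- move=> b' /remove_blockP[b /andP[bB bU] ->] /=.
  have [_] := other_block_ends bB bU; have := bnd_B _ bB; have := r_min bB.
  by case: b bU bB => [[a c] l] _ _ /=; rewrite !inE /newidx; lia.
- move=> k lt_kn; have [x lt_x [x_sr <-]] := newidx_onto lt_sr lt_rn lt_kn.
  have [b bB xb] := cover x lt_x.
  have bU : b != U by apply: contraNneq x_sr => eb; rewrite eb in xb.
  exists ((newidx s r b.1.1, newidx s r b.1.2), b.2); first exact: mem_remove_block.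
  by move: xb; rewrite !inE => /predU1P[->|/eqP->]; rewrite eqxx ?orbT.
- move=> b' c' x /remove_blockP[b /andP[bB bU] ->].
  move=> /remove_blockP[c /andP[cB cU] ->].
  move=> /ends_remove_block[y yb ->] /ends_remove_block[z zc eq_yz].
  have y_sr := pairing_ends_disjoint pairB UB bB bU yb.
  have z_sr := pairing_ends_disjoint pairB UB cB cU zc.
  have eyz : y = z by move: eq_yz y_sr z_sr; rewrite !inE /newidx /=; lia.
  by rewrite (disj _ _ _ bB cB yb); last rewrite eyz.
Qed.

Lemma is_hom_remove_block : is_hom E B -> is_hom E (remove_block U B).
Proof.
move=> homB b' c' /remove_blockP[b /andP[bB bU] ->].
move=> /remove_blockP[c /andP[cB cU] ->].
have [b1 b2] := other_block_ends bB bU; have [c1 c2] := other_block_ends cB cU.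
have lt_sr : s < r by have [lt_B _ _ _] := pairB; apply: lt_B UB.
by rewrite /crossb /= !newidx_ltE //; apply: homB.
Qed.

End RemoveMinBlock.

(* Top-level copies of the let-bound helpers of [Phi], so that one
   recursion step of [Phi] unfolds to [Phi_step] by conversion. *)
Definition uat (u : seq (seq 'I_L)) s r k := nth [::] u (newidx s r k).

Definition uminus u s r k :=
  let J := [seq j <- iota 0 k | (j != s) && (j != r)] in
  if J is [::] then [::] else uat u s r (last 0 J).

Definition Phi_step s r (i : 'I_L) u N :=
  [seq (if k < s then uat u s r k else if k == s then i :: uminus u s r s
        else if k < r then i :: uat u s r k else if k == r then uminus u s r r
        else uat u s r k) | k <- iota 0 N].

Lemma Phi_recE n B U rest :
  [seq b <- B | b.1.2 == foldr minn (2 * n.+1) [seq b.1.2 | b <- B]] = U :: rest ->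
  U.1.1 < U.1.2 < 2 * n.+1 ->
  Phi n.+1 B = Phi_step U.1.1 U.1.2 U.2 (Phi n (remove_block U B)) (2 * n.+1).
Proof.
move=> minU; case: n minU => [|n] minU; last by rewrite [Phi _ B]/= minU.
(* [Phi 1] is a literal in its definition, and agrees with [Phi_step] on the empty walk. *)
case: U minU => [[s r] i] /= minU lt_sr.
have [-> ->] : s = 0 /\ r = 1 by lia.
by rewrite /= minU.
Qed.

Section PhiStep.
Variables (s r : nat) (i : 'I_L) (u : seq (seq 'I_L)) (N : nat).
Hypothesis lt_sr : s < r.

Let w := Phi_step s r i u N.

Lemma uminusE k : uminus u s r k = vtx u (newidx s r k).
Proof.
elim: k => [|k IH]; first by rewrite /uminus /= /vtx /newidx.
rewrite /uminus filter_iotaS; case: ifP => k_sr.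
  have -> : newidx s r k.+1 = (newidx s r k).+1 by rewrite /newidx; lia.
  by case: [seq _ <- _ | _] => [|? ?] //=; rewrite last_rcons.
have -> : newidx s r k.+1 = newidx s r k by rewrite /newidx; lia.
exact: IH.
Qed.

Lemma vtx_Phi_step j : j <= N -> vtx w j = nseq (s < j <= r) i ++ vtx u (newidx s r j).
Proof.
case: j => [|k] lt_kN; first by rewrite /vtx /newidx; case: s.
have uatE j : uat u s r j = vtx u (newidx s r j).+1 by [].
rewrite {1}/vtx /= /w /Phi_step (nth_map 0) ?size_iota // nth_iota // add0n !uminusE !uatE.
case: (boolP (s < k.+1 <= r)) => ? /=; repeat case: ifP => ?;
  first [congr (_ :: vtx u _) | congr (vtx u _) | exfalso]; rewrite /newidx; lia.
Qed.

Lemma vtx_Phi_step_off k : k < N -> k \notin [:: s; r] ->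
  vtx w k.+1 = nseq (s < k <= r) i ++ vtx u (newidx s r k).+1.
Proof.
rewrite !inE => lt_kN k_sr; rewrite vtx_Phi_step //.
have -> : newidx s r k.+1 = (newidx s r k).+1 by rewrite /newidx; lia.
by have -> : (s < k.+1 <= r) = (s < k <= r) by lia.
Qed.

Lemma vtx_Phi_step_left : s < N -> vtx w s.+1 = i :: vtx w s.
Proof.
move=> lt_sN; rewrite !vtx_Phi_step //; last exact: ltnW.
rewrite ltnSn lt_sr ltnn /=.
by congr (_ :: vtx u _); rewrite /newidx; lia.
Qed.

Lemma vtx_Phi_step_right : r < N -> vtx w r = i :: vtx w r.+1.
Proof.
move=> lt_rN; rewrite !vtx_Phi_step //; last exact: ltnW.
rewrite lt_sr leqnn ltnn andbF /=.
by congr (_ :: vtx u _); rewrite /newidx; lia.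
Qed.

End PhiStep.

Lemma pairing_walk_Phi_step N B s r i u :
  pairing N.+2 B -> is_hom E B -> ((s, r), i) \in B -> {in B, forall b, r <= b.1.2} ->
  pairing_walk N (remove_block ((s, r), i) B) u ->
  pairing_walk N.+2 B (Phi_step s r i u N.+2).
Proof.
move=> pairB homB UB r_min [size_u last_u steps_u].
have [lt_B bnd_B _ _] := pairB.
have lt_sr : s < r := lt_B _ UB.
have lt_rN : r < N.+2 := bnd_B _ UB.
split; first by rewrite size_map size_iota.
  rewrite vtx_Phi_step //; have -> : (s < N.+2 <= r) = false by lia.
  by have -> : newidx s r N.+2 = N by rewrite /newidx; lia.
move=> b bB; case: (eqVneq b ((s, r), i)) => [-> | bU] /=.
  have lt_sN := ltn_trans lt_sr lt_rN.
  by rewrite vtx_Phi_step_left ?vtx_Phi_step_right //; split; apply: teq_refl.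
have [a_sr c_sr] := other_block_ends pairB UB bB bU.
have [step_a step_c] := steps_u _ (mem_remove_block bB bU).
have lt_ac := lt_B _ bB; have lt_cN := bnd_B _ bB; have le_rc := r_min _ bB.
have cross_Ub := homB _ _ UB bB.
case: b => [[a c] l] /= in bB bU a_sr c_sr step_a step_c lt_ac lt_cN le_rc cross_Ub *.
rewrite !vtx_Phi_step_off ?vtx_Phi_step //; try lia.
move: a_sr c_sr; rewrite !inE => a_sr c_sr.
have -> : (s < c <= r) = false by lia.
split=> //; case: (boolP (s < a <= r)) => [a_in | _] //=.
have E_il : E i l by apply: cross_Ub; rewrite /crossb /=; lia.
exact: teq_trans (teq_catl [:: i] step_a) (@teq_swap _ E [::] _ i l E_il).
Qed.

Lemma Phi_pairing_walk n B :
  pairing (2 * n) B -> is_hom E B -> pairing_walk (2 * n) B (Phi n B).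
Proof.
elim: n B => [|n IH] B pairB homB.
  have [_ bnd_B _ _] := pairB.
  by split=> [//||b /bnd_B //]; apply: teq_refl.
have [[[s r] i] [rest [minU UB r_min]]] := pairing_min_block pairB isT.
have [lt_B bnd_B _ _] := pairB.
rewrite (Phi_recE minU) /=; last by apply/andP; split; [exact: lt_B UB | exact: bnd_B UB].
have e : 2 * n.+1 = (2 * n).+2 by rewrite mulnS.
rewrite e in pairB *; apply: pairing_walk_Phi_step => //.
apply: IH; first exact: pairing_remove_block.
exact: is_hom_remove_block pairB UB homB.
Qed.

End TracePaths.

Theorem lemma3p2 (L : nat) (E : rel 'I_L) :
  symmetric E -> irreflexive E ->
  forall p : nat, 1 <= p ->
  forall B : seq (lblock L),
    is_pairpart p B -> is_hom E B ->
    in_paths E p (Phi p B).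
Proof.
move=> _ _ p p_gt0 B /is_pairpart_pairing pairB homB.
have [size_w last_w steps_w] := Phi_pairing_walk pairB homB.
have [_ _ cover _] := pairB.
split=> //; split=> [k /cover[b bB] | ].
  have [step_s step_r] := steps_w b bB.
  by rewrite !inE => /predU1P[-> | /eqP->]; exists b.2; [right | left].
have : 0 < 2 * p by rewrite muln_gt0.
by move: last_w; rewrite /vtx; case: (2 * p).
Qed.
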